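(* Let $A\in\mathbb{R}^{m\times n}$ with $m<n$, let $B$ be a matrix whose columns form a basis of the null space of $A$, let $p\in(0,1)$, let $T\subseteq\{1,\dots,n\}$ be a fixed support and let $\sigma\in\{-1,+1\}^T$ be a fixed sign pattern. Then every $\mathbf{x}\in\mathbb{R}^n$ with support exactly $T$ and $\operatorname{sgn}(x_i)=\sigma_i$ for all $i\in T$ is the unique solution of the $\ell_p$-minimization problem $\min\{\|\mathbf{v}\|_p^p : A\mathbf{v}=A\mathbf{x}\}$ if and only if the following holds for every nonzero vector $\mathbf{z}$ (of dimension equal to the number of columns of $B$): with $T^-=\{i\in T:(B\mathbf{z})_i\sigma_i<0\}$ and $T^+=\{i\in T:(B\mathbf{z})_i\sigma_i\ge 0\}$, $$\|B_{T^-}\mathbf{z}\|_p^p\le \|B_{T^c}\mathbf{z}\|_p^p,$$ and moreover, if $B_{T^+}\mathbf{z}=\mathbf{0}$, then $\|B_{T^-}\mathbf{z}\|_p^p< \|B_{T^c}\mathbf{z}\|_p^p$.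
   Context: For $p>0$, $\|\mathbf{v}\|_p^p=\sum_i|v_i|^p$. For an index set $S$, $B_S$ denotes the submatrix of $B$ consisting of the rows indexed by $S$; $T^c=\{1,\dots,n\}\setminus T$. The support of $\mathbf{x}$ is $\{i: x_i\neq 0\}$. *)

From Stdlib Require Import Reals.
Open Scope R_scope.

(* Vectors in R^d are functions nat -> R; only indices 0..d-1 matter
   (0-based indexing of {1,...,d}). Matrices are nat -> nat -> R. *)

Fixpoint fsum (d : nat) (f : nat -> R) : R :=
  match d with
  | O => 0
  | S d' => fsum d' f + f d'
  end.

Definition matvec (M : nat -> nat -> R) (d : nat) (v : nat -> R) (i : nat) : R :=
  fsum d (fun j => M i j * v j).

(* a^p with the convention 0^p = 0 (p > 0) *)
Definition rpow (a p : R) : R := if Req_EM_T a 0 then 0 else Rpower a p.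

Definition Rltb (a b : R) : bool := if Rlt_dec a b then true else false.

(* sum_{i < d, sel i} |w_i|^p  = || w_S ||_p^p with S = {i : sel i} *)
Definition lpp (p : R) (d : nat) (sel : nat -> bool) (w : nat -> R) : R :=
  fsum d (fun i => if sel i then rpow (Rabs (w i)) p else 0).

Definition sgn (a : R) : R :=
  if Rlt_dec 0 a then 1 else if Rlt_dec a 0 then -1 else 0.

Definition null_basis (A : nat -> nat -> R) (m n : nat) (B : nat -> nat -> R) (k : nat) : Prop :=
  (forall j, (j < k)%nat -> forall i, (i < m)%nat -> matvec A n (fun l => B l j) i = 0)
  /\ (forall z : nat -> R,
        (forall i, (i < n)%nat -> matvec B k z i = 0) -> forall j, (j < k)%nat -> z j = 0)
  /\ (forall v : nat -> R,
        (forall i, (i < m)%nat -> matvec A n v i = 0) ->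
        exists z : nat -> R, forall i, (i < n)%nat -> v i = matvec B k z i).

Definition unique_lp_solution (A : nat -> nat -> R) (m n : nat) (p : R) (x : nat -> R) : Prop :=
  forall v : nat -> R,
    (forall i, (i < m)%nat -> matvec A n v i = matvec A n x i) ->
    (exists i, (i < n)%nat /\ v i <> x i) ->
    lpp p n (fun _ => true) x < lpp p n (fun _ => true) v.

(* Write a competitor of [x] as [x + w] with [w = B z] in the null space of [A].
   Coordinatewise, [||x + w||_p^p - ||x||_p^p] exceeds
   [||w_{T^c}||_p^p - ||w_{T^-}||_p^p] by a nonnegative amount: on [T^-] by
   subadditivity of [t |-> t^p], on [T^+] because [x_i] and [w_i] have the same
   sign, strictly so where [w_i <> 0].  This gives sufficiency.  Conversely, the
   [x] that cancels [w] on [T^-] and equals [sigma_i M] on [T^+] makes the total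
   excess at most [n ((M + C)^p - M^p)], which tends to [0] by concavity, and is
   [0] when [w] vanishes on [T^+]. *)

From Stdlib Require Import Reals Lra Lia Classical.
Open Scope R_scope.

Lemma fsum_ext d f g : (forall i, (i < d)%nat -> f i = g i) -> fsum d f = fsum d g.
Proof.
  induction d as [|d IH]; intros Hfg; simpl; [reflexivity|].
  rewrite IH, Hfg; auto with arith.
Qed.

Lemma fsum_plus d f g : fsum d (fun i => f i + g i) = fsum d f + fsum d g.
Proof. induction d as [|d IH]; simpl; [lra | rewrite IH; lra]. Qed.

Lemma fsum_minus d f g : fsum d (fun i => f i - g i) = fsum d f - fsum d g.
Proof. induction d as [|d IH]; simpl; [lra | rewrite IH; lra]. Qed.

Lemma fsum_scal d c f : fsum d (fun i => c * f i) = c * fsum d f.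
Proof. induction d as [|d IH]; simpl; [lra | rewrite IH; lra]. Qed.

Lemma fsum_eq0 d f : (forall i, (i < d)%nat -> f i = 0) -> fsum d f = 0.
Proof.
  induction d as [|d IH]; intros Hf; simpl; [reflexivity|].
  rewrite IH, Hf; auto with arith; lra.
Qed.

Lemma fsum_comm d e f :
  fsum d (fun l => fsum e (fun j => f l j)) = fsum e (fun j => fsum d (fun l => f l j)).
Proof.
  induction d as [|d IH]; simpl.
  - symmetry; apply fsum_eq0; reflexivity.
  - rewrite IH, <- fsum_plus; reflexivity.
Qed.

Lemma fsum_le d f g : (forall i, (i < d)%nat -> f i <= g i) -> fsum d f <= fsum d g.
Proof.
  induction d as [|d IH]; intros Hfg; simpl; [lra|].
  assert (fsum d f <= fsum d g) by (apply IH; intros; apply Hfg; lia).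
  assert (f d <= g d) by (apply Hfg; lia).
  lra.
Qed.

Lemma fsum_lt d f g :
  (forall i, (i < d)%nat -> f i <= g i) -> (exists i, (i < d)%nat /\ f i < g i) ->
  fsum d f < fsum d g.
Proof.
  induction d as [|d IH]; intros Hfg [i [Hi Hlt]]; simpl; [lia|].
  assert (f d <= g d) by (apply Hfg; lia).
  destruct (Nat.eq_dec i d) as [->|Hid].
  - assert (fsum d f <= fsum d g) by (apply fsum_le; intros; apply Hfg; lia). lra.
  - assert (fsum d f < fsum d g).
    { apply IH; [intros; apply Hfg; lia | exists i; split; [lia | exact Hlt]]. }
    lra.
Qed.

Lemma fsum_ge0 d f : (forall i, (i < d)%nat -> 0 <= f i) -> 0 <= fsum d f.
Proof.
  intros Hf; rewrite <- (fsum_eq0 d (fun _ => 0)) by reflexivity.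
  apply fsum_le; exact Hf.
Qed.

Lemma fsum_le_mul d f c : (forall i, (i < d)%nat -> f i <= c) -> fsum d f <= INR d * c.
Proof.
  induction d as [|d IH]; intros Hf; simpl fsum; [simpl; lra|].
  rewrite S_INR.
  assert (fsum d f <= INR d * c) by (apply IH; intros; apply Hf; lia).
  assert (f d <= c) by (apply Hf; lia).
  lra.
Qed.

Lemma fsum_bound d (f : nat -> R) :
  exists C, 0 <= C /\ forall i, (i < d)%nat -> Rabs (f i) <= C.
Proof.
  induction d as [|d [C [HC Hf]]].
  - exists 0; split; [lra | intros; lia].
  - exists (Rmax C (Rabs (f d))); split.
    + eapply Rle_trans; [exact HC | apply Rmax_l].
    + intros i Hi; destruct (Nat.eq_dec i d) as [->|Hid]; [apply Rmax_r|].
      eapply Rle_trans; [apply Hf; lia | apply Rmax_l].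
Qed.

Lemma matvec_plus M d u w i :
  matvec M d (fun l => u l + w l) i = matvec M d u i + matvec M d w i.
Proof. unfold matvec; rewrite <- fsum_plus; apply fsum_ext; intros; ring. Qed.

Lemma matvec_minus M d u w i :
  matvec M d (fun l => u l - w l) i = matvec M d u i - matvec M d w i.
Proof. unfold matvec; rewrite <- fsum_minus; apply fsum_ext; intros; ring. Qed.

Lemma matvec_comp_null A B m n k z :
  (forall j, (j < k)%nat -> forall i, (i < m)%nat -> matvec A n (fun l => B l j) i = 0) ->
  forall i, (i < m)%nat -> matvec A n (matvec B k z) i = 0.
Proof.
  intros HAB i Hi; unfold matvec.
  transitivity (fsum k (fun j => z j * matvec A n (fun l => B l j) i)).
  - transitivity (fsum n (fun l => fsum k (fun j => A i l * B l j * z j))).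
    + apply fsum_ext; intros l _; rewrite <- fsum_scal; apply fsum_ext; intros; ring.
    + rewrite fsum_comm; apply fsum_ext; intros j _.
      unfold matvec; rewrite <- fsum_scal; apply fsum_ext; intros; ring.
  - apply fsum_eq0; intros j Hj; rewrite HAB by assumption; ring.
Qed.

Lemma matvec_eq0 M d z : (forall j, (j < d)%nat -> z j = 0) -> forall i, matvec M d z i = 0.
Proof. intros Hz i; apply fsum_eq0; intros j Hj; rewrite Hz by assumption; ring. Qed.

Lemma rpow_0 p : rpow 0 p = 0.
Proof. unfold rpow; destruct (Req_EM_T 0 0); [reflexivity | lra]. Qed.

Lemma rpow_Rpower a p : 0 < a -> rpow a p = Rpower a p.
Proof. intros Ha; unfold rpow; destruct (Req_EM_T a 0); [lra | reflexivity]. Qed.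

Lemma rpow_lt a b p : 0 < p -> 0 <= a < b -> rpow a p < rpow b p.
Proof.
  intros Hp [[Ha|<-] Hab].
  - rewrite !rpow_Rpower by lra; apply Rlt_Rpower_l; lra.
  - rewrite rpow_0, rpow_Rpower by lra; apply exp_pos.
Qed.

Lemma rpow_le a b p : 0 < p -> 0 <= a <= b -> rpow a p <= rpow b p.
Proof. intros Hp [Ha [Hab|<-]]; [left; apply rpow_lt | right]; lra. Qed.

Lemma Rpower_le_neg a b q : q < 0 -> 0 < a <= b -> Rpower b q <= Rpower a q.
Proof.
  intros Hq Hab; replace q with (- (- q)) by ring.
  rewrite (Rpower_Ropp a), (Rpower_Ropp b).
  apply Rinv_le_contravar; [apply exp_pos | apply Rle_Rpower_l; lra].
Qed.

Lemma Rpower_pred a p : 0 < a -> Rpower a p = a * Rpower a (p - 1).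
Proof.
  intros Ha; replace p with (1 + (p - 1)) at 1 by ring.
  rewrite Rpower_plus, Rpower_1 by assumption; reflexivity.
Qed.

(* [(a+b)^p = a (a+b)^(p-1) + b (a+b)^(p-1)] and [t |-> t^(p-1)] decreases. *)
Lemma rpow_subadditive a b p : 0 < p < 1 -> 0 <= a -> 0 <= b ->
  rpow (a + b) p <= rpow a p + rpow b p.
Proof.
  intros Hp [Ha|<-] [Hb|<-]; rewrite ?Rplus_0_l, ?Rplus_0_r, ?rpow_0; try lra.
  rewrite !rpow_Rpower, (Rpower_pred (a + b)), (Rpower_pred a), (Rpower_pred b) by lra.
  assert (Rpower (a + b) (p - 1) <= Rpower a (p - 1)) by (apply Rpower_le_neg; lra).
  assert (Rpower (a + b) (p - 1) <= Rpower b (p - 1)) by (apply Rpower_le_neg; lra).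
  nra.
Qed.

Lemma rpow_abs_sub x w p : 0 < p < 1 ->
  rpow (Rabs x) p <= rpow (Rabs (x + w)) p + rpow (Rabs w) p.
Proof.
  intros Hp; eapply Rle_trans; [| apply rpow_subadditive; auto using Rabs_pos].
  apply rpow_le; [lra | split; [apply Rabs_pos |]].
  replace x with ((x + w) + - w) at 1 by ring.
  rewrite <- (Rabs_Ropp w); apply Rabs_triang.
Qed.

(* Concavity: [(M+C)^p - M^p <= C M^(p-1)], and [M^(p-1)] is as small as we wish. *)
Lemma rpow_increment_small C eps p : 0 < p < 1 -> 0 <= C -> 0 < eps ->
  exists M, 0 < M /\ rpow (M + C) p - rpow M p < eps.
Proof.
  intros Hp HC Heps.
  set (M := Rpower (eps / (C + 1)) (/ (p - 1))).
  assert (HM : 0 < M) by apply exp_pos.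
  assert (HMp : Rpower M (p - 1) = eps / (C + 1)).
  { unfold M; rewrite Rpower_mult, Rinv_l, Rpower_1 by (try apply Rdiv_lt_0_compat; lra).
    reflexivity. }
  exists M; split; [exact HM|].
  rewrite !rpow_Rpower, (Rpower_pred (M + C)), (Rpower_pred M) by lra.
  assert (Rpower (M + C) (p - 1) <= Rpower M (p - 1)) by (apply Rpower_le_neg; lra).
  assert (C * (eps / (C + 1)) < eps).
  { apply Rmult_lt_reg_r with (C + 1); [lra|].
    replace (C * (eps / (C + 1)) * (C + 1)) with (C * eps) by (field; lra). nra. }
  assert (0 < Rpower M (p - 1)) by apply exp_pos.
  nra.
Qed.

Lemma Rabs_plus_same_sign a b : 0 <= a * b -> Rabs (a + b) = Rabs a + Rabs b.
Proof.
  intros Hab; unfold Rabs.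
  destruct (Rcase_abs (a + b)), (Rcase_abs a), (Rcase_abs b); nra.
Qed.

Lemma sgn_mul_pos x s : (s = 1 \/ s = -1) -> sgn x = s -> 0 < x * s.
Proof.
  unfold sgn; intros [-> | ->]; destruct (Rlt_dec 0 x); destruct (Rlt_dec x 0); lra.
Qed.

Lemma sgn_of_mul_pos x s : (s = 1 \/ s = -1) -> 0 < x * s -> sgn x = s.
Proof.
  unfold sgn; intros [-> | ->] Hxs; destruct (Rlt_dec 0 x); destruct (Rlt_dec x 0); lra.
Qed.

Definition tminus (T : nat -> bool) (sigma w : nat -> R) (i : nat) : bool :=
  (T i && Rltb (w i * sigma i) 0)%bool.

Definition tplus (T : nat -> bool) (sigma w : nat -> R) (i : nat) : bool :=
  (T i && negb (Rltb (w i * sigma i) 0))%bool.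

Definition signed_support (n : nat) (T : nat -> bool) (sigma x : nat -> R) : Prop :=
  (forall i, (i < n)%nat -> (x i <> 0 <-> T i = true))
  /\ (forall i, T i = true -> sgn (x i) = sigma i).

Definition lp_excess (p xi wi : R) (Ti : bool) (si : R) : R :=
  rpow (Rabs (xi + wi)) p - rpow (Rabs xi) p
  - ((if negb Ti then rpow (Rabs wi) p else 0)
     - (if (Ti && Rltb (wi * si) 0)%bool then rpow (Rabs wi) p else 0)).

Lemma lpp_add_decomp p n T sigma x w :
  lpp p n (fun _ => true) (fun i => x i + w i)
  = lpp p n (fun _ => true) x
    + (lpp p n (fun i => negb (T i)) w - lpp p n (tminus T sigma w) w)
    + fsum n (fun i => lp_excess p (x i) (w i) (T i) (sigma i)).
Proof.
  unfold lpp, lp_excess, tminus; rewrite !fsum_minus; ring.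
Qed.

Section LpExcess.

Variables (p xi wi si : R) (Ti : bool).
Hypothesis Hp : 0 < p < 1.
Hypothesis Hsupp : Ti = false -> xi = 0.
Hypothesis Hsgn : Ti = true -> sgn xi = si.
Hypothesis Hsi : Ti = true -> si = 1 \/ si = -1.

Lemma lp_excess_ge0 : 0 <= lp_excess p xi wi Ti si.
Proof.
  unfold lp_excess, Rltb; destruct Ti; simpl.
  - destruct (Rlt_dec (wi * si) 0) as [Hneg|Hnneg]; simpl.
    + pose proof (rpow_abs_sub xi wi p Hp); lra.
    + assert (0 < xi * si) by (apply sgn_mul_pos; auto).
      destruct (Hsi eq_refl) as [-> | ->];
      rewrite Rabs_plus_same_sign by nra;
      pose proof (rpow_le (Rabs xi) (Rabs xi + Rabs wi) p ltac:(lra)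
                    ltac:(pose proof (Rabs_pos xi); pose proof (Rabs_pos wi); lra));
      lra.
  - rewrite Hsupp, Rplus_0_l, Rabs_R0, rpow_0 by reflexivity; lra.
Qed.

Lemma lp_excess_gt0 :
  (Ti && negb (Rltb (wi * si) 0))%bool = true -> wi <> 0 -> 0 < lp_excess p xi wi Ti si.
Proof.
  unfold lp_excess, Rltb; intros Hplus Hw; destruct Ti; [| discriminate].
  destruct (Rlt_dec (wi * si) 0) as [Hneg|Hnneg]; simpl in *; [discriminate|].
  assert (0 < xi * si) by (apply sgn_mul_pos; auto).
  assert (0 < Rabs wi) by (apply Rabs_pos_lt; exact Hw).
  destruct (Hsi eq_refl) as [-> | ->];
  rewrite Rabs_plus_same_sign by nra;
  pose proof (rpow_lt (Rabs xi) (Rabs xi + Rabs wi) p ltac:(lra)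
                ltac:(pose proof (Rabs_pos xi); lra));
  lra.
Qed.

End LpExcess.

Lemma nsp_sufficient p n T sigma x w :
  0 < p < 1 -> (forall i, T i = true -> sigma i = 1 \/ sigma i = -1) ->
  signed_support n T sigma x ->
  lpp p n (tminus T sigma w) w <= lpp p n (fun i => negb (T i)) w ->
  ((forall i, (i < n)%nat -> tplus T sigma w i = true -> w i = 0) ->
   lpp p n (tminus T sigma w) w < lpp p n (fun i => negb (T i)) w) ->
  lpp p n (fun _ => true) x < lpp p n (fun _ => true) (fun i => x i + w i).
Proof.
  intros Hp Hsigma [Hsupp Hsgn] Hle Hlt.
  rewrite (lpp_add_decomp p n T sigma).
  assert (Hoff : forall i, (i < n)%nat -> T i = false -> x i = 0).
  { intros i Hi HTi; apply NNPP; intros Hx; apply (Hsupp i Hi) in Hx; congruence. }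
  destruct (classic (forall i, (i < n)%nat -> tplus T sigma w i = true -> w i = 0))
    as [Hzero | Hnz].
  - assert (0 <= fsum n (fun i => lp_excess p (x i) (w i) (T i) (sigma i))).
    { apply fsum_ge0; intros i Hi; apply lp_excess_ge0; auto. }
    specialize (Hlt Hzero); lra.
  - assert (0 < fsum n (fun i => lp_excess p (x i) (w i) (T i) (sigma i))).
    { rewrite <- (fsum_eq0 n (fun _ => 0)) by reflexivity.
      apply fsum_lt; [intros i Hi; apply lp_excess_ge0; auto|].
      apply NNPP; intros Hnone; apply Hnz; intros i Hi Hplus.
      apply NNPP; intros Hw; apply Hnone; exists i; split; [exact Hi|].
      apply lp_excess_gt0; auto. }
    lra.
Qed.

Definition nsp_witness (M wi : R) (Ti : bool) (si : R) : R :=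
  if Ti then (if Rltb (wi * si) 0 then - wi else si * M) else 0.

Lemma nsp_witness_signed_support M n T sigma w :
  0 < M -> (forall i, T i = true -> sigma i = 1 \/ sigma i = -1) ->
  signed_support n T sigma (fun i => nsp_witness M (w i) (T i) (sigma i)).
Proof.
  intros HM Hsigma; unfold nsp_witness, Rltb; split.
  - intros i _; destruct (T i) eqn:HTi; [| split; [lra | discriminate]].
    split; [reflexivity | intros _].
    destruct (Rlt_dec (w i * sigma i) 0); [| destruct (Hsigma i HTi) as [-> | ->]]; nra.
  - intros i HTi; rewrite HTi; apply sgn_of_mul_pos; [auto|].
    destruct (Rlt_dec (w i * sigma i) 0); [lra|].
    destruct (Hsigma i HTi) as [-> | ->]; lra.
Qed.

Lemma lp_excess_nsp_witness p M wi Ti si :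
  0 < M -> (Ti = true -> si = 1 \/ si = -1) ->
  lp_excess p (nsp_witness M wi Ti si) wi Ti si
  = if (Ti && negb (Rltb (wi * si) 0))%bool then rpow (M + Rabs wi) p - rpow M p else 0.
Proof.
  intros HM Hsi; unfold lp_excess, nsp_witness, Rltb; destruct Ti; simpl.
  - destruct (Rlt_dec (wi * si) 0); simpl.
    + rewrite Rplus_opp_l, Rabs_R0, rpow_0, Rabs_Ropp; ring.
    + destruct (Hsi eq_refl) as [-> | ->];
      rewrite Rabs_plus_same_sign by nra;
      [rewrite Rmult_1_l | replace (-1 * M) with (- M) by ring; rewrite Rabs_Ropp];
      rewrite Rabs_right by lra; ring.
  - rewrite Rplus_0_l, Rabs_R0, rpow_0; ring.
Qed.

Lemma nsp_necessary p n T sigma w :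
  0 < p < 1 -> (forall i, T i = true -> sigma i = 1 \/ sigma i = -1) ->
  (forall x, signed_support n T sigma x ->
     lpp p n (fun _ => true) x < lpp p n (fun _ => true) (fun i => x i + w i)) ->
  lpp p n (tminus T sigma w) w <= lpp p n (fun i => negb (T i)) w
  /\ ((forall i, (i < n)%nat -> tplus T sigma w i = true -> w i = 0) ->
      lpp p n (tminus T sigma w) w < lpp p n (fun i => negb (T i)) w).
Proof.
  intros Hp Hsigma Huniq.
  set (gap := lpp p n (fun i => negb (T i)) w - lpp p n (tminus T sigma w) w).
  set (excess M := fsum n (fun i => lp_excess p (nsp_witness M (w i) (T i) (sigma i))
                                     (w i) (T i) (sigma i))).
  assert (Hgain : forall M, 0 < M -> 0 < gap + excess M).
  { intros M HM.
    pose proof (Huniq _ (nsp_witness_signed_support M n T sigma w HM Hsigma)) as Hlt.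
    rewrite (lpp_add_decomp p n T sigma) in Hlt; unfold gap, excess; lra. }
  split.
  - apply Rnot_lt_le; intros Hneg.
    destruct (fsum_bound n w) as [C [HC HwC]].
    assert (Hn := pos_INR n).
    assert (Heps : 0 < - gap / (INR n + 1)) by (apply Rdiv_lt_0_compat; unfold gap; lra).
    destruct (rpow_increment_small C _ p Hp HC Heps) as [M [HM Hsmall]].
    assert (excess M <= INR n * (- gap / (INR n + 1))).
    { eapply Rle_trans; [apply fsum_le_mul with (c := rpow (M + C) p - rpow M p)|].
      - intros i Hi; rewrite lp_excess_nsp_witness by auto.
        pose proof (Rabs_pos (w i)); specialize (HwC i Hi).
        assert (rpow M p <= rpow (M + C) p) by (apply rpow_le; lra).
        assert (rpow (M + Rabs (w i)) p <= rpow (M + C) p) by (apply rpow_le; lra).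
        destruct (_ && _)%bool; lra.
      - apply Rmult_le_compat_l; lra. }
    assert (gap + INR n * (- gap / (INR n + 1)) = gap / (INR n + 1)) by (field; lra).
    assert (gap / (INR n + 1) < 0).
    { apply Rmult_neg_pos; [unfold gap; lra | apply Rinv_0_lt_compat; lra]. }
    specialize (Hgain M HM); lra.
  - intros Hzero.
    assert (excess 1 <= 0).
    { rewrite <- (fsum_eq0 n (fun _ => 0)) by reflexivity.
      apply fsum_le; intros i Hi; rewrite lp_excess_nsp_witness by (auto; lra).
      destruct (tplus T sigma w i) eqn:Hplus; unfold tplus in Hplus; rewrite Hplus; [|lra].
      rewrite (Hzero i Hi Hplus), Rabs_R0, Rplus_0_r; lra. }
    specialize (Hgain 1 Rlt_0_1); unfold gap in Hgain; lra.
Qed.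

Theorem theorem3
  (m n k : nat) (A B : nat -> nat -> R) (p : R)
  (T : nat -> bool) (sigma : nat -> R)
  (Hmn : (m < n)%nat)
  (HB : null_basis A m n B k)
  (Hp : 0 < p < 1)
  (HT : forall i, T i = true -> (i < n)%nat)
  (Hsigma : forall i, T i = true -> sigma i = 1 \/ sigma i = -1) :
  (forall x : nat -> R,
      (forall i, (i < n)%nat -> (x i <> 0 <-> T i = true)) ->
      (forall i, T i = true -> sgn (x i) = sigma i) ->
      unique_lp_solution A m n p x)
  <->
  (forall z : nat -> R,
      (exists j, (j < k)%nat /\ z j <> 0) ->
      let Bz := matvec B k z in
      let Tminus := fun i => andb (T i) (Rltb (Bz i * sigma i) 0) in
      let Tplus := fun i => andb (T i) (negb (Rltb (Bz i * sigma i) 0)) in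
      let Tc := fun i => negb (T i) in
      lpp p n Tminus Bz <= lpp p n Tc Bz
      /\ ((forall i, (i < n)%nat -> Tplus i = true -> Bz i = 0) ->
          lpp p n Tminus Bz < lpp p n Tc Bz)).
Proof.
  destruct HB as [HAB [Hinj Hspan]]; split.
  - intros Huniq z [j [Hj Hzj]]; cbv zeta.
    apply (nsp_necessary p n T sigma (matvec B k z) Hp Hsigma).
    intros x [Hsupp Hsgn]; apply Huniq; [exact Hsupp | exact Hsgn | |].
    + intros i Hi; rewrite matvec_plus, (matvec_comp_null A B m n k z HAB i Hi); ring.
    + apply NNPP; intros Hfix; apply Hzj; apply (Hinj z); [| exact Hj].
      intros i Hi; apply NNPP; intros HBz; apply Hfix; exists i; split; [exact Hi | lra].
  - intros Hcond x Hsupp Hsgn v Hv [i0 [Hi0 Hvx]].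
    destruct (Hspan (fun i => v i - x i)) as [z Hz].
    { intros i Hi; rewrite matvec_minus, Hv by exact Hi; ring. }
    assert (Hz0 : exists j, (j < k)%nat /\ z j <> 0).
    { apply NNPP; intros Hnone; apply Hvx.
      assert (v i0 - x i0 = 0); [| lra].
      rewrite Hz by exact Hi0; apply matvec_eq0; intros j Hj.
      apply NNPP; intros Hzj; apply Hnone; exists j; split; assumption. }
    replace (lpp p n (fun _ => true) v)
      with (lpp p n (fun _ => true) (fun i => x i + matvec B k z i)).
    + destruct (Hcond z Hz0) as [Hle Hlt].
      apply (nsp_sufficient p n T sigma); [exact Hp | exact Hsigma | split | exact Hle | exact Hlt];
        assumption.
    + unfold lpp; apply fsum_ext; intros i Hi; rewrite <- Hz by exact Hi.
      replace (x i + (v i - x i)) with (v i) by ring; reflexivity.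
Qed.
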